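(* Let $F:X\to X$ be an interaction, let $S\in st_0(\Gamma_F)$, and let $\mathcal{X}_SF$ be the expansion of $F$ over $S$. If $\tilde\Lambda_{pq}$ are constants satisfying the Lipschitz condition for $\mathcal{X}_SF$ with $\rho(\tilde\Lambda)<1$, then $F$ has a globally attracting fixed point, i.e. there exists $\bar x\in X$ such that $F^k(y)\to\bar x$ as $k\to\infty$ for every $y\in X$.
   Context: Let $\mathcal{I}=\{1,\dots,n\}$, $(X_i,d)$ compact metric spaces, $X=\prod_iX_i$ with $d_{\max}(x,y)=\max_id(x_i,y_i)$. An interaction $F:X\to X$ is given by nonempty $\mathcal{I}_j\subseteq\mathcal{I}$ and continuous $F_j:\prod_{i\in\mathcal{I}_j}X_i\to X_j$ with $F(x)_j=F_j(\{x_i\}_{i\in\mathcal{I}_j})$, together with constants $\Lambda_{ij}\ge0$ ($\Lambda_{ij}=0$ if $i\notin\mathcal{I}_j$) with $d(F_j(\{x_i\}),F_j(\{y_i\}))\le\sum_{i\in\mathcal{I}_j}\Lambda_{ij}d(x_i,y_i)$. For a map $G$ on a finite product $\prod_pY_p$ of compact metric spaces whose $q$-th component is a continuous function of the coordinates in a set $\mathcal{J}_q$, constants $\tilde\Lambda_{pq}\ge0$ ($=0$ for $p\notin\mathcal{J}_q$) satisfy the Lipschitz condition if $d(G(u)_q,G(w)_q)\le\sum_{p}\tilde\Lambda_{pq}d(u_p,w_p)$ for all $u,w$. $\rho$ is spectral radius. The graph of interactions $\Gamma_F$ has vertices $v_1,\dots,v_n$ and an edge $v_i\to v_j$ of weight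 $\Lambda_{ij}$ when $i\in\mathcal{I}_j$. $st_0(\Gamma_F)$ is the set of nonempty $S\subseteq\{v_1,\dots,v_n\}$ such that the subgraph induced on the complement of $S$ has no directed cycles and no loops; $\mathcal{I}_S=\{j:v_j\in S\}$. A branch is a path of distinct vertices $u_1,\dots,u_m$, or a cycle ($u_1=u_m$, others distinct), with $u_1,u_m\in S$ and interior vertices $u_2,\dots,u_{m-1}\notin S$; $|\beta|=m$; $\mathcal{B}_S(\Gamma_F)$ denotes the set of branches. Expansion $\mathcal{X}_SF$: for each branch $\beta$ with $r=|\beta|-2\ge1$ introduce new coordinates $\eta(\beta,1),\dots,\eta(\beta,r)$ (distinct new indices), each with state space $X_{a_0}$, $v_{a_0}$ the initial vertex of $\beta$; $B_S$ is the product of these spaces and $X|_S=\prod_{j\in\mathcal{I}_S}X_j$. For $j\in\mathcal{I}_S$, start from $F_j(\{x_i\}_{i\in\mathcal{I}_j})$ and repeatedly replace each occurring variable $x_i$ with $i\notin\mathcal{I}_S$ by $F_i(\{x_k\}_{k\in\mathcal{I}_i})$ until only variables with indices in $\mathcal{I}_S$ remain; each occurrence of $x_{a_0}$ nested as $F_j(\dots F_{a_r}(\dots F_{a_1}(\dots x_{a_0}\dots)))$ corresponds to the branch $\beta=v_{a_0},v_{a_1},\dots,v_{a_r},v_j$ and is replaced by $x_{\eta(\beta,r)}$ if $r\ge1$ (unchanged if $r=0$); the result is $\tilde F_j$. Then $\mathcal{X}_SF:X|_S\times B_S\to X|_S\times B_S$ has components $(\mathcal{X}_SF)_j=\tilde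 F_j$ ($j\in\mathcal{I}_S$), $(\mathcal{X}_SF)_{\eta(\beta,1)}=x_{a_0}$, and $(\mathcal{X}_SF)_{\eta(\beta,\ell)}=x_{\eta(\beta,\ell-1)}$ for $2\le\ell\le|\beta|-2$. *)

From HB Require Import structures.
From mathcomp Require Import all_boot all_order all_algebra.
From mathcomp Require Import classical_sets reals.
From mathcomp Require Import complex.
From mathcomp Require Import zify.

Set Implicit Arguments.
Unset Strict Implicit.
Unset Printing Implicit Defensive.

Import Order.TTheory GRing.Theory Num.Theory.
Local Open Scope ring_scope.

Section Metric.
Variables (R : realType) (T : Type) (d : T -> T -> R).

Definition is_metric : Prop :=
  [/\ forall x y, 0 <= d x y,
      forall x y, d x y = 0 <-> x = y,
      forall x y, d x y = d y x &
      forall x y z, d x z <= d x y + d y z].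

Definition dopen (U : T -> Prop) : Prop :=
  forall x, U x -> exists2 e : R, 0 < e & forall y, d x y < e -> U y.

Definition dcompact : Prop :=
  forall (I : Type) (U : I -> T -> Prop),
    (forall i, dopen (U i)) -> (forall x, exists i, U i x) ->
    exists s : seq I, forall x, exists i, List.In i s /\ U i x.
End Metric.

Definition dmax (R : realType) (I : finType) (Y : I -> Type)
  (dY : forall i, Y i -> Y i -> R) (u w : forall i, Y i) : R :=
  \big[Num.max/0]_(i : I) dY i (u i) (w i).

Definition dcontinuous (R : realType) (I : finType) (Y : I -> Type)
  (dY : forall i, Y i -> Y i -> R) (Z : Type) (dZ : Z -> Z -> R)
  (g : (forall i, Y i) -> Z) : Prop :=
  forall u (e : R), 0 < e -> exists2 del : R, 0 < del &
    forall w, dmax dY u w < del -> dZ (g u) (g w) < e.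

(* Lipschitz condition for constants L p q for a map G on a finite product,
   whose q-th component depends on the coordinates p with J q p *)
Definition lipschitz_consts (R : realType) (I : finType) (Y : I -> Type)
  (dY : forall i, Y i -> Y i -> R) (G : (forall i, Y i) -> forall i, Y i)
  (J : I -> I -> bool) (L : I -> I -> R) : Prop :=
  [/\ forall p q, 0 <= L p q,
      forall p q, ~~ J q p -> L p q = 0 &
      forall u w q, dY q (G u q) (G w q) <= \sum_(p : I) L p q * dY p (u p) (w p)].

Definition spectral_radius (R : realType) (m : nat) (A : 'M[R]_m) : R :=
  sup [set r : R | exists2 l : R[i],
         eigenvalue (map_mx (fun x : R => x%:C%C) A) l & `|l| = r%:C%C].

Definition mx_of (R : realType) (I : finType) (L : I -> I -> R) : 'M[R]_#|I| :=
  \matrix_(i, j) L (enum_val i) (enum_val j).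

Local Close Scope ring_scope.

Section Graph.
Variables (n : nat) (Ij : 'I_n -> {set 'I_n}).

Definition gedge : rel 'I_n := fun i j => i \in Ij j.

(* S \in st_0(Gamma_F): S nonempty and the subgraph induced on the complement
   of S has no directed cycles and no loops.  A directed cycle (or a loop,
   when p = [:: c]) is c :: p with p nonempty, the walk following edges,
   returning to c, with the vertices of p pairwise distinct. *)
Definition st0 (S : {set 'I_n}) : Prop :=
  S != finset.set0 /\
  forall (c : 'I_n) (p : seq 'I_n),
    ~ [/\ p != [::], path gedge c p, last c p = c, uniq p &
          all (fun v => v \notin S) (c :: p)].

Definition is_branch (S : {set 'I_n}) (beta : seq 'I_n) : bool :=
  match beta with
  | [::] => false
  | a0 :: rest =>
      [&& 0 < size rest, path gedge a0 rest, a0 \in S, last a0 rest \in S,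
          all (fun v => v \notin S) (behead (belast a0 rest)) &
          uniq (a0 :: rest) || ((last a0 rest == a0) && uniq rest)]
  end.

(* finite encoding of a sequence of length <= n + 1 : head and tail tuple *)
Definition bcode := ('I_n * {m : 'I_n.+1 & m.-tuple 'I_n})%type.
Definition bseq (c : bcode) : seq 'I_n := c.1 :: tval (tagged c.2).

Variable S : {set 'I_n}.

(* raw indices of the expansion: inl j (j in I_S) or inr (beta, l) = eta(beta,l) *)
Definition eraw := ('I_n + (bcode * 'I_n.+1))%type.

Definition eidx (v : eraw) : bool :=
  match v with
  | inl j => j \in S
  | inr (c, l) => [&& is_branch S (bseq c), 3 <= size (bseq c),
                      1 <= l & l <= size (bseq c) - 2]
  end.

Definition EI := {v : eraw | eidx v}.

Definition base' (v : eraw) : 'I_n :=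
  match v with inl j => j | inr (c, _) => c.1 end.
Definition base (p : EI) : 'I_n := base' (val p).

(* dependency sets: J q p  <->  coordinate p occurs in (X_S F)_q *)
Definition dep (q p : EI) : bool :=
  match val q, val p with
  | inl j, inl k => k \in Ij j
  | inl j, inr (c, l) => (last c.1 (tval (tagged c.2)) == j) &&
                         ((l : nat) == size (bseq c) - 2)
  | inr (c, l), inl k => ((l : nat) == 1) && (k == c.1)
  | inr (c, l), inr (c', l') => (c' == c) && ((l : nat) != 1) &&
                                ((l' : nat) == (l : nat).-1)
  end.

Lemma eidx_head (c : bcode) (l : 'I_n.+1) :
  eidx (inr (c, l)) -> eidx (inl c.1).
Proof.
rewrite /eidx /bseq /is_branch => /and4P[/and5P[_ _ H _ _] _ _ _] //.
Qed.

Lemma eidx_pred (c : bcode) (l : 'I_n.+1) :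
  eidx (inr (c, l)) -> ((l : nat) == 1) = false ->
  eidx (inr (c, inord (l : nat).-1)).
Proof.
move=> /and4P[Hb H3 H1 H2] Hl; apply/and4P; split => //;
  rewrite inordK; [| by have := ltn_ord l; lia | | by have := ltn_ord l; lia];
  move/eqP: Hl; lia.
Qed.

End Graph.

Section Expansion.
Variables (n : nat) (X : 'I_n -> Type) (Ij : 'I_n -> {set 'I_n}).
Variable Fj : forall j : 'I_n, (forall k : {k : 'I_n | k \in Ij j}, X (val k)) -> X j.

Definition Fmap (x : forall i, X i) : forall j, X j :=
  fun j => Fj (fun k : {k : 'I_n | k \in Ij j} => x (val k)).

Variable S : {set 'I_n}.
(* x0 : default points, only used in unreachable branches of the recursion
   (recursion depth is bounded when S \in st_0) *)
Variable x0 : forall i, X i.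
Variable x : forall p : EI Ij S, X (base p).

Definition look (v : eraw n) (H : eidx Ij S v) : X (base' v) :=
  x (exist _ v H).

(* the variable replacing an occurrence of x_k (k in S) nested as
   F_j(... F_{a_r}(... F_{a_1}(... x_k ...))), where q = [:: a_1; ...; a_r; j];
   the branch is beta = k :: q and r = size q - 1 *)
Definition argS (k : 'I_n) (HkS : k \in S) (q : seq 'I_n) : X k :=
  if size q == 1%N then look (v := inl k) HkS
  else match (insub q : option ((inord (size q) : 'I_n.+1).-tuple 'I_n)) with
  | Some t =>
      let v : eraw n :=
        inr ((k, existT (fun m : 'I_n.+1 => m.-tuple 'I_n) (inord (size q)) t),
             inord (size q).-1) in
      (if eidx Ij S v as b return eidx Ij S v = b -> X k
       then fun H => look H else fun _ => look (v := inl k) HkS) (erefl _)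
  | None => look (v := inl k) HkS
  end.

(* value of the substituted expression for F_c, where q lists the vertices
   from c up to the top index j *)
Fixpoint evalE (fuel : nat) (c : 'I_n) (q : seq 'I_n) {struct fuel} : X c :=
  Fj (fun k : {k : 'I_n | k \in Ij c} =>
    (if val k \in S as b return (val k \in S) = b -> X (val k)
     then fun HkS => argS HkS q
     else fun _ => match fuel with
                   | 0 => x0 (val k)
                   | fuel'.+1 => evalE fuel' (val k) (val k :: q)
                   end) (erefl _)).

Definition expcomp (v : eraw n) : eidx Ij S v -> X (base' v) :=
  match v as v0 return eidx Ij S v0 -> X (base' v0) with
  | inl j => fun _ => evalE n j [:: j]
  | inr (c, l) => fun H =>
      (if (l : nat) == 1%N as b return ((l : nat) == 1%N) = b -> X c.1
       then fun _ => look (v := inl c.1) (eidx_head H)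
       else fun Hl => look (v := inr (c, inord (l : nat).-1)) (eidx_pred H Hl))
      (erefl _)
  end.

End Expansion.

Definition expansion (n : nat) (X : 'I_n -> Type) (Ij : 'I_n -> {set 'I_n})
  (Fj : forall j : 'I_n, (forall k : {k : 'I_n | k \in Ij j}, X (val k)) -> X j)
  (S : {set 'I_n}) (x0 : forall i, X i)
  (x : forall p : EI Ij S, X (base p)) : forall p : EI Ij S, X (base p) :=
  fun p => @expcomp n X Ij Fj S x0 x (val p) (valP p).

(* Follow an orbit [x_k = F^k y] through the expansion: the lifted state
   [z_k] puts [x_k] on the coordinates of [S] and the delayed value
   [(x_(k-l))_(a_0)] on [eta(beta, l)].  Once [k >= n] the substitution defining
   the expansion unwinds along branches of length at most [n] (there is no
   cycle outside [S]), so [z_(k+1)] is the image of [z_k] by the expansion, and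
   the constants [Lt] give [d(z_(n+m), z'_(n+m)) <= B (Lt^m 1)], where [B]
   bounds the diameters.  As [rho(Lt) < 1], [Lt^m] tends to [0] (factor the
   characteristic polynomial over [C] and use Cayley-Hamilton), hence any two
   orbits synchronize on [S]; outside [S] every coordinate is a Lipschitz
   function of its inputs, and following inputs backwards reaches [S] within
   [n] steps, so orbits synchronize everywhere.  Each orbit is then Cauchy,
   converges by compactness, and the common limit is a fixed point. *)

From HB Require Import structures.
From mathcomp Require Import all_boot all_order all_algebra.
From mathcomp Require Import classical_sets reals complex.
From mathcomp Require Import zify lra.
From Stdlib Require Import Classical FunctionalExtensionality ClassicalEpsilon.

Set Implicit Arguments.
Unset Strict Implicit.
Unset Printing Implicit Defensive.

Import Order.TTheory GRing.Theory Num.Theory.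
Local Open Scope ring_scope.

Definition eventually (P : nat -> Prop) : Prop :=
  exists N, forall k, (N <= k)%N -> P k.

Lemma eventually_forall_fin (I : finType) (P : I -> nat -> Prop) :
  (forall i, eventually (P i)) -> eventually (fun k => forall i, P i k).
Proof.
move=> evP.
suff [N HN] : eventually (fun k => forall i, i \in enum I -> P i k).
  by exists N => k Nk i; apply: HN; rewrite ?mem_enum.
elim: (enum I) => [|i s [N HN]]; first by exists 0%N.
have [Ni HNi] := evP i.
exists (maxn N Ni) => k; rewrite geq_max => /andP[Nk Nik] j.
by rewrite inE => /orP[/eqP->|js]; [apply: HNi | apply: HN].
Qed.

Lemma eventually_and (P Q : nat -> Prop) :
  eventually P -> eventually Q -> eventually (fun k => P k /\ Q k).
Proof.
move=> [N HN] [M HM]; exists (maxn N M) => k.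
by rewrite geq_max => /andP[Nk Mk]; split; [apply: HN | apply: HM].
Qed.

Lemma dep_if_true (b : bool) (P : Type) (f : b = true -> P) (g : b = false -> P)
  (H : b = true) :
  (if b as b' return b = b' -> P then f else g) (erefl b) = f H.
Proof. by move: f g H; case: b => f g H //; rewrite (eq_irrelevance H erefl). Qed.

Lemma dep_if_false (b : bool) (P : Type) (f : b = true -> P) (g : b = false -> P)
  (H : b = false) :
  (if b as b' return b = b' -> P then f else g) (erefl b) = g H.
Proof. by move: f g H; case: b => f g H //; rewrite (eq_irrelevance H erefl). Qed.

Section RealSequences.
Variable R : realType.

Definition cvg0 (u : nat -> R) := forall e : R, 0 < e -> eventually (fun k => `|u k| < e).

Lemma cvg0_contraction (a : R) (w r : nat -> R) : 0 <= a -> a < 1 ->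
  (forall k, 0 <= w k) -> (forall k, w k.+1 <= a * w k + r k) -> cvg0 r -> cvg0 w.
Proof.
move=> a0 a1 w0 wr rc e e0.
pose del := (1 - a) * e / 2.
have del0 : 0 < del by apply: divr_gt0 => //; apply: mulr_gt0 => //; lra.
have [N HN] := rc del del0.
(* below [e] the sequence stays below [e]; above it, it drops by at least [del] *)
have stay_small k : (N <= k)%N -> w k < e -> w k.+1 < e.
  move=> Nk wke; have := HN k Nk; have := wr k; have := ler_norm (r k).
  have : a * w k <= a * e by apply: ler_wpM2l => //; apply: ltW.
  rewrite /del; nra.
have drop_big k : (N <= k)%N -> e <= w k -> w k.+1 <= w k - del.
  move=> Nk wke; have := HN k Nk; have := wr k; have := ler_norm (r k).
  have : (1 - a) * e <= (1 - a) * w k by apply: ler_wpM2l => //; lra.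
  rewrite /del; nra.
have small_or_drop m : w (N + m)%N < e \/ w (N + m)%N <= w N - m%:R * del.
  elim: m => [|m [IH|IH]]; first by right; rewrite addn0 mul0r subr0.
    by left; rewrite addnS; apply: stay_small => //; apply: leq_addr.
  have [lt|ge] := ltP (w (N + m)%N) e.
    by left; rewrite addnS; apply: stay_small => //; apply: leq_addr.
  right; rewrite addnS; have := drop_big _ (leq_addr m N) ge.
  rewrite -natr1 mulrDl mul1r; lra.
pose M := Num.Def.archi_bound (w N / del).
have HM : w N < M%:R * del.
  by rewrite -ltr_pdivrMr //; apply: archi_boundP; apply: divr_ge0 => //; apply: ltW.
have HNM : w (N + M)%N < e by case: (small_or_drop M) => // H; have := w0 (N + M)%N; lra.
exists (N + M)%N => k Nk; rewrite ger0_norm //.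
rewrite -(subnKC Nk); elim: (k - (N + M))%N => [|j IH]; first by rewrite addn0.
by rewrite addnS; apply: stay_small => //; rewrite -addnA leq_addr.
Qed.

End RealSequences.

Section MetricSpace.
Variables (R : realType) (T : Type) (d : T -> T -> R).
Hypothesis d_metric : is_metric d.

Lemma dist_ge0 x y : 0 <= d x y. Proof. by case: d_metric. Qed.
Lemma dist_sym x y : d x y = d y x. Proof. by case: d_metric. Qed.
Lemma dist_tri x y z : d x z <= d x y + d y z. Proof. by case: d_metric. Qed.
Lemma dist_xx x : d x x = 0. Proof. by case: d_metric => _ H _ _; apply/H. Qed.
Lemma dist_eq0 x y : d x y = 0 -> x = y. Proof. by case: d_metric => _ H _ _ /H. Qed.

Lemma dopen_ball x e : dopen d (fun y => d x y < e).
Proof.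
move=> y Hy; exists (e - d x y) => [|z Hz]; first by lra.
by have := dist_tri x y z; lra.
Qed.

Lemma In_le_foldr_max (s : seq nat) i : List.In i s -> (i <= foldr maxn 0 s)%N.
Proof.
elim: s => //= j s IH [->|/IH]; first exact: leq_maxl.
by move/leq_trans; apply; apply: leq_maxr.
Qed.

Hypothesis d_compact : dcompact d.

Lemma dcompact_bounded x0 : eventually (fun B : nat => forall y, d x0 y < B%:R).
Proof.
have [s Hs] := d_compact (fun k : nat => @dopen_ball x0 k%:R)
  (fun y => ex_intro (fun i : nat => d x0 y < i%:R) _ (archi_boundP (dist_ge0 x0 y))).
exists (foldr maxn 0 s) => B sB y; have [i [Hi Hy]] := Hs y.
by apply: (lt_le_trans Hy); rewrite ler_nat (leq_trans (In_le_foldr_max Hi)).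
Qed.

Definition dcauchy (a : nat -> T) := forall e : R, 0 < e -> exists N,
  forall k m, (N <= k)%N -> (N <= m)%N -> d (a k) (a m) < e.

Definition dcvg (a : nat -> T) (L : T) :=
  forall e : R, 0 < e -> eventually (fun k => d (a k) L < e).

Lemma dcauchy_eventually_far a x : dcauchy a -> ~ dcvg a x ->
  exists e : R, exists N, 0 < e /\ forall k, (N <= k)%N -> e <= d x (a k).
Proof.
move=> a_cauchy a_ncvg; apply: NNPP => Hne; apply: a_ncvg => e e0.
have [N0 HN0] := a_cauchy (e / 2) (divr_gt0 e0 (ltr0Sn _ 1)).
apply: NNPP => HnN.
have [k [Nk Hk]] : exists k, (N0 <= k)%N /\ d x (a k) < e / 2.
  apply: NNPP => Hk; apply: Hne; exists (e / 2), N0; split; first exact: divr_gt0.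
  by move=> k Nk; rewrite leNgt; apply/negP => Hlt; apply: Hk; exists k.
apply: HnN; exists N0 => m Nm.
have := HN0 m k Nm Nk; have := dist_tri (a m) (a k) x.
by rewrite (dist_sym x (a k)) in Hk; lra.
Qed.

(* If a Cauchy sequence had no limit, every point would have a ball that the
   sequence eventually leaves for good; a finite subcover of these balls
   cannot contain the far-away term [a K]. *)
Lemma dcompact_cauchy_cvg a : dcauchy a -> exists L, dcvg a L.
Proof.
move=> a_cauchy; apply: NNPP => a_ncvg.
pose I := {p : T * R * nat | 0 < p.1.2 /\
  forall k, (p.2 <= k)%N -> p.1.2 <= d p.1.1 (a k)}.
have cover y : exists i : I, d (sval i).1.1 y < (sval i).1.2.
  have [e [N [e0 HN]]] := dcauchy_eventually_far a_cauchy (fun H => a_ncvg (ex_intro _ y H)).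
  by exists (exist _ (y, e, N) (conj e0 HN)); rewrite /= dist_xx.
have [s Hs] := d_compact (fun i : I => @dopen_ball _ _) cover.
pose K := foldr maxn 0 (map (fun i : I => (sval i).2) s).
have [i [Hi Hy]] := Hs (a K).
case: (svalP i) => _ /(_ K) H.
have : d (sval i).1.1 (a K) < d (sval i).1.1 (a K).
  apply: lt_le_trans Hy (H _); apply: In_le_foldr_max.
  exact: (List.in_map (fun i : I => (sval i).2)).
by rewrite ltxx.
Qed.

End MetricSpace.

Section SpectralRadius.
Variable R : realType.
Local Notation C := R[i].

Lemma normr_normc (z : C) : `|z| = (Normc.normc z)%:C%C.
Proof. by case: z => a b; rewrite normc_def. Qed.

Lemma normc_real (x : R) : Normc.normc (x%:C%C) = `|x|.
Proof. by rewrite /= expr0n /= addr0 sqrtr_sqr. Qed.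

Lemma normc_ge0 (z : C) : 0 <= Normc.normc z.
Proof. by case: z => a b /=; apply: sqrtr_ge0. Qed.

(* The action of [\prod_(z <- rs) ('X - z)] on sequences through the shift. *)
Fixpoint shift_sub (rs : seq C) (u : nat -> C) : nat -> C :=
  if rs is z :: rs' then shift_sub rs' (fun k => u k.+1 - z * u k) else u.

Lemma shift_sub_eq0_cvg0 rs u : all (fun z => Normc.normc z < 1) rs ->
  (forall k, shift_sub rs u k = 0) -> cvg0 (fun k => Normc.normc (u k)).
Proof.
elim: rs u => [|z rs IH] u /=.
  by move=> _ u0 e e0; exists 0%N => k _; rewrite u0 Normc.normc0 normr0.
move=> /andP[zlt1 rs_lt1] /(IH _ rs_lt1) diff_cvg0.
apply: (cvg0_contraction (normc_ge0 z) zlt1 _ _ diff_cvg0) => [k|k].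
  exact: normc_ge0.
by have := le_normcD (z * u k) (u k.+1 - z * u k); rewrite addrC subrK Normc.normcM.
Qed.

Variable N : nat.
Variable A : 'M[R]_N.+1.
Local Notation AC := (map_mx (real_complex R) A).

Lemma map_mx_real_complexX k : AC ^+ k = map_mx (real_complex R) (A ^+ k).
Proof.
elim: k => [|k IH]; first by rewrite !expr0 map_mx1.
by rewrite !exprSr IH -!mulmxE map_mxM.
Qed.

Lemma shift_sub_mx rs (M : 'M[C]_N.+1) i j k :
  shift_sub rs (fun k => (AC ^+ k *m M) i j) k =
  (AC ^+ k *m (horner_mx AC (\prod_(z <- rs) ('X - z%:P)) *m M)) i j.
Proof.
elim: rs M k => [|z rs IH] M k /=; first by rewrite big_nil rmorph1 mul1mx.
have -> : (fun k => (AC ^+ k.+1 *m M) i j - z * (AC ^+ k *m M) i j) =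
          (fun k => (AC ^+ k *m ((AC - z%:M) *m M)) i j).
  apply: functional_extensionality => m.
  rewrite mulmxBl mulmxBr !mulmxA exprSr !mulmxE.
  rewrite -[_ ^+ m * z%:M]/(_ *m _) mul_mx_scalar.
  by rewrite -[(z *: _) * M]/((z *: _) *m M) -scalemxAl !mxE.
rewrite IH big_cons mulrC rmorphM /= rmorphB /= horner_mx_X horner_mx_C.
by rewrite !mulmxE !mulrA.
Qed.

(* Over [C] the characteristic polynomial splits as [\prod_(z <- rs) ('X - z)]
   with every [|z| < 1]; by Cayley-Hamilton each entry of the powers of [A]
   is annihilated by [shift_sub rs]. *)
Lemma spectral_radius_lt1_cvg0 : spectral_radius A < 1 ->
  forall i j, cvg0 (fun k => (A ^+ k) i j).
Proof.
move=> rho_lt1 i j.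
have [rs Hrs] := closed_field_poly_normal (char_poly AC).
rewrite (monicP (char_poly_monic AC)) scale1r in Hrs.
have eigenE z : eigenvalue AC z = (z \in rs).
  by rewrite eigenvalue_root_char Hrs root_prod_XsubC.
move: rho_lt1; rewrite /spectral_radius; set E := (X in sup X) => rho_lt1.
have ubE : has_ubound E.
  exists (\sum_(z <- rs) Normc.normc z) => r [l Hl Hn].
  rewrite normr_normc in Hn; move/complexI: Hn => <-.
  rewrite eigenE in Hl; rewrite (big_rem l) //= lerDl.
  by apply: sumr_ge0 => z _; apply: normc_ge0.
have rs_lt1 : all (fun z => Normc.normc z < 1) rs.
  apply/allP => z zr; apply: le_lt_trans rho_lt1.
  by apply: ub_le_sup => //; exists z; rewrite ?eigenE ?normr_normc.
have shift_sub0 k : shift_sub rs (fun k => (AC ^+ k *m 1%:M) i j) k = 0.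
  by rewrite shift_sub_mx -Hrs Cayley_Hamilton mul0mx mulmx0 mxE.
move=> e /(shift_sub_eq0_cvg0 rs_lt1 shift_sub0) [M HM].
exists M => k /HM.
by rewrite mulmx1 map_mx_real_complexX mxE normc_real normr_id.
Qed.

End SpectralRadius.

Lemma spectral_radius_lt1_mx_cvg0 (R : realType) (N : nat) (A : 'M[R]_N) :
  spectral_radius A < 1 -> forall i j, cvg0 (fun k => (A ^+ k) i j).
Proof. by case: N A => [|N] A rho_lt1 i; [case: i | exact: spectral_radius_lt1_cvg0]. Qed.

Lemma uniq_size_ord (n : nat) (q : seq 'I_n) : uniq q -> (size q <= n)%N.
Proof. by move/card_uniqP <-; rewrite -[n in (_ <= n)%N]card_ord max_card. Qed.

Section Lifting.
Variables (n : nat) (X : 'I_n -> Type) (Ij : 'I_n -> {set 'I_n}).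
(* Dependent section variables such as [x0 i] or [Fj j a] would otherwise get
   their index argument declared implicit. *)
Unset Implicit Arguments.
Variable x0 : forall i, X i.
Variable Fj : forall j : 'I_n, (forall k : {k : 'I_n | k \in Ij j}, X (val k)) -> X j.
Set Implicit Arguments.
Variable S : {set 'I_n}.
Hypothesis S_st0 : st0 Ij S.
Local Notation F := (Fmap Fj).

Lemma st0_no_cycle_through (i : 'I_n) (q : seq 'I_n) : i \notin S ->
  path (gedge Ij) i q -> uniq q -> i \in q ->
  all (fun v => v \notin S) (take (index i q).+1 q) -> False.
Proof.
move=> iS iq_path q_uniq iq iq_S.
have iq_lt : (index i q < size q)%N by rewrite index_mem.
apply: (S_st0.2 i (take (index i q).+1 q)); split.
- by case: q iq {iq_path q_uniq iq_S iq_lt}.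
- exact: take_path.
- rewrite (last_nth i) size_take.
  have -> : (if (index i q).+1 < size q then (index i q).+1 else size q)%N
    = (index i q).+1 by case: ltnP => //; lia.
  by rewrite /= nth_take // nth_index.
- exact: take_uniq.
- by rewrite /= iS.
Qed.

(* Otherwise [k, c, ..., k] would be a cycle outside [S]. *)
Lemma st0_fresh_predecessor (k c : 'I_n) q' : k \notin S -> k \in Ij c ->
  path (gedge Ij) c q' -> last c q' \in S -> all (fun v => v \notin S) (belast c q') ->
  uniq (c :: q') -> k \notin c :: q'.
Proof.
move=> kS kc cq_path cq_last cq_S cq_uniq; apply/negP => kq.
have kb : k \in belast c q'.
  move: kq; rewrite (lastI c q') mem_rcons inE => /orP[/eqP kE|//].
  by rewrite kE cq_last in kS.
apply: (st0_no_cycle_through kS _ _ kq) => //; first by rewrite /= cq_path andbT.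
rewrite (lastI c q') -cats1 index_cat kb takel_cat; last by rewrite index_mem.
by apply/allP => v /mem_take vb; move/allP: cq_S; apply.
Qed.

Definition lift_state (y : forall i, X i) (k : nat) : forall p : EI Ij S, X (base p) :=
  fun p => match val p as v return X (base' v) with
  | inl j => iter k F y j
  | inr (c, l) => iter (k - l) F y c.1
  end.

Definition branch_tail (fuel : nat) (c : 'I_n) (q : seq 'I_n) :=
  exists q', [/\ q = c :: q', path (gedge Ij) c q', last c q' \in S,
    all (fun v => v \notin S) (belast c q') & uniq q /\ (n.+1 <= fuel + size q)%N].

Lemma argS_lift_state y k (i : 'I_n) (iS : i \in S) (c : 'I_n) q' :
  i \in Ij c -> path (gedge Ij) c q' -> last c q' \in S ->
  all (fun v => v \notin S) (belast c q') -> uniq (c :: q') -> (n <= k)%N ->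
  argS (lift_state y k) iS (c :: q') = iter (k - size q') F y i.
Proof.
move=> ic cq_path cq_last cq_S cq_uniq nk.
have cq_size : (size (c :: q') <= n)%N := uniq_size_ord cq_uniq.
rewrite /argS; case: eqP => [[q'0]|q'1]; first by rewrite /look /= q'0 subn0.
case: insubP => [t _ tE|]; last by move/negP; rewrite inordK.
have q'_gt0 : (0 < size q')%N by move: q'1 => /=; lia.
have eta_idx : eidx Ij S (inr ((i, existT (fun m : 'I_n.+1 => m.-tuple 'I_n)
    (inord (size (c :: q'))) t), inord (size (c :: q')).-1)) = true.
  rewrite /eidx /bseq /= -[tval t]/(val t) tE.
  rewrite inordK; last by move: cq_size => /=; lia.
  rewrite cq_uniq !andbT.
  have -> : (2 < (size (c :: q')).+1)%N by rewrite /=; lia.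
  have -> : (size q' <= (size (c :: q')).+1 - 2)%N by rewrite /=; lia.
  rewrite q'_gt0 /= [gedge Ij i c]/gedge ic cq_path iS cq_last cq_S /= andbT.
  case iq : (i \in c :: q') => //.
  move: iq; rewrite (lastI c q') mem_rcons inE => /orP[/eqP->|ib].
    by rewrite eqxx orbT.
  by move/allP: cq_S => /(_ _ ib); rewrite iS.
rewrite (dep_if_true _ _ eta_idx) /look /lift_state /= inordK //.
by move: cq_size => /=; lia.
Qed.

(* Unfolding the substitution along a branch ending at time [k] reads the
   orbit at the time shifted back by the length of the branch. *)
Lemma evalE_lift_state fuel : forall c q y k, branch_tail fuel c q -> (n <= k)%N ->
  evalE Fj x0 (lift_state y k) fuel c q = iter (k.+1 - (size q).-1) F y c.
Proof.
elim: fuel => [|fuel IH] c q y k [q' [-> cq_path cq_last cq_S [cq_uniq fuel_ge]]] nk.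
all: have cq_size : (size (c :: q') <= n)%N := uniq_size_ord cq_uniq.
  by move: fuel_ge cq_size => /=; lia.
have -> : (k.+1 - (size (c :: q')).-1 = (k - size q').+1)%N by move: cq_size => /=; lia.
rewrite iterS /Fmap /=; congr (Fj _); apply: functional_extensionality_dep => i.
have /orP[iS|iS] := orbN (val i \in S).
- rewrite (@dep_if_true _ _ (fun H : val i \in S => argS (lift_state y k) H (c :: q')) _ iS).
  exact: (argS_lift_state y iS (valP i) cq_path cq_last cq_S cq_uniq nk).
- rewrite (dep_if_false _ _ (negbTE iS)) IH //.
  have iq := st0_fresh_predecessor iS (valP i) cq_path cq_last cq_S cq_uniq.
  exists (c :: q'); split => //.
  + by rewrite /= [gedge _ _ _]/gedge (valP i) cq_path.
  + by rewrite /= iS.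
  + by split; [rewrite cons_uniq iq cq_uniq | move: fuel_ge => /=; lia].
Qed.

Lemma expansion_lift_state y k : (n <= k)%N ->
  expansion Fj x0 (lift_state y k) = lift_state y k.+1.
Proof.
move=> nk; apply: functional_extensionality_dep => -[[j|[c l]] p_idx].
  rewrite /expansion /expcomp /= (evalE_lift_state (q := [:: j])) //.
  by exists [::]; split => //; split => //; rewrite addn1.
rewrite /expansion /=; have /orP[l1|l1] := orbN ((l : nat) == 1%N).
  by rewrite (dep_if_true _ _ l1) /look /lift_state /= (eqP l1) subn1.
rewrite (dep_if_false _ _ (negbTE l1)) /look /lift_state /=.
have l_gt0 : (1 <= l)%N by case/and4P: p_idx.
have l_lt := ltn_ord l.
rewrite inordK; last lia.
by have -> : (k.+1 - l = k - (l : nat).-1)%N by lia.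
Qed.

End Lifting.

Section CompactProduct.
Variables (R : realType) (I : finType) (X : I -> Type).
Unset Implicit Arguments.
Variable d : forall i, X i -> X i -> R.
Variable G : (forall i, X i) -> forall i, X i.
Hypothesis d_metric : forall i, is_metric (d i).
Hypothesis d_compact : forall i, dcompact (d i).
Set Implicit Arguments.

Lemma dist_bounded_fin (x0 : forall i, X i) :
  exists2 B : R, 0 <= B & forall i (u w : X i), d i u w <= B.
Proof.
have [B HB] := eventually_forall_fin
  (fun i => dcompact_bounded (d_metric i) (d_compact i) (x0 i)).
exists (B%:R + B%:R) => [|i u w]; first by rewrite addr_ge0 ?ler0n.
have := dist_tri (d_metric i) u (x0 i) w; rewrite (dist_sym (d_metric i) u (x0 i)).
by have := HB B (leqnn B) i u; have := HB B (leqnn B) i w; lra.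
Qed.

Lemma dmax_lt (u w : forall i, X i) (e : R) : 0 < e ->
  (forall i, d i (u i) (w i) < e) -> dmax d u w < e.
Proof.
move=> e0 uw_lt; apply: (big_ind (fun x => x < e)) => // x y xe ye.
by rewrite gt_max xe ye.
Qed.

Hypothesis G_cont : forall u j (e : R), 0 < e -> exists2 del : R, 0 < del &
  forall w, (forall i, d i (u i) (w i) < del) -> d j (G u j) (G w j) < e.
Hypothesis G_sync : forall e : R, 0 < e ->
  eventually (fun k => forall i y y', d i (iter k G y i) (iter k G y' i) < e).

Lemma iter_dcauchy y i : dcauchy (d i) (fun k => iter k G y i).
Proof.
move=> e /G_sync [K HK]; exists K.
have close_later k m : (k <= m)%N -> (K <= k)%N -> d i (iter k G y i) (iter m G y i) < e.
  by move=> km Kk; rewrite -(subnKC km) iterD; apply: HK.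
move=> k m Kk Km; case: (leqP k m) => km; first exact: close_later.
by rewrite dist_sym //; apply: close_later => //; apply: ltnW.
Qed.

Lemma dcvg_fixed_point y (xbar : forall i, X i) :
  (forall i, dcvg (d i) (fun k => iter k G y i) (xbar i)) -> G xbar = xbar.
Proof.
move=> y_cvg; apply: functional_extensionality_dep => j.
apply: (dist_eq0 (d_metric j)); apply/eqP; rewrite eq_le dist_ge0 // andbT leNgt.
apply/negP; set x := d j _ _ => x_gt0.
have x2_gt0 : 0 < x / 2 by apply: divr_gt0.
have [del del_gt0 Gdel] := G_cont xbar j x2_gt0.
have [K HK] := eventually_and (eventually_forall_fin (fun i => y_cvg i del del_gt0))
                              (y_cvg j _ x2_gt0).
have [near_xbar near_xbarj] := HK K.+1 (leqnSn K).
have : d j (G xbar j) (iter K.+1 G y j) < x / 2.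
  by rewrite iterS; apply: Gdel => i; rewrite dist_sym //; apply: (proj1 (HK K (leqnn K))).
have := dist_tri (d_metric j) (G xbar j) (iter K.+1 G y j) (xbar j).
by rewrite -/x; lra.
Qed.

Lemma synchronizing_attracting_fixed_point (x0 : forall i, X i) :
  exists xbar : forall i, X i, G xbar = xbar /\
    forall y (e : R), 0 < e -> eventually (fun k => dmax d (iter k G y) xbar < e).
Proof.
have x0_cvg i : exists L, dcvg (d i) (fun k => iter k G x0 i) L.
  exact: dcompact_cauchy_cvg (d_metric i) (d_compact i) _ (iter_dcauchy x0 i).
pose xbar i := proj1_sig (constructive_indefinite_description _ (x0_cvg i)).
have xbar_lim i : dcvg (d i) (fun k => iter k G x0 i) (xbar i).
  exact: proj2_sig (constructive_indefinite_description _ (x0_cvg i)).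
exists xbar; split; first exact: dcvg_fixed_point xbar_lim.
move=> y e e_gt0; have e2_gt0 : 0 < e / 2 by apply: divr_gt0.
have [K HK] := eventually_and (G_sync e2_gt0)
  (eventually_forall_fin (fun i => xbar_lim i _ e2_gt0)).
exists K => k /HK [sync_k lim_k]; apply: dmax_lt => // i.
have := dist_tri (d_metric i) (iter k G y i) (iter k G x0 i) (xbar i).
by have := sync_k i y x0; have := lim_k i; lra.
Qed.

End CompactProduct.

Section Synchronization.
Variables (R : realType) (n : nat) (X : 'I_n -> Type) (Ij : 'I_n -> {set 'I_n}).
Unset Implicit Arguments.
Variable d : forall i, X i -> X i -> R.
Hypothesis d_metric : forall i, is_metric (d i).
Hypothesis d_compact : forall i, dcompact (d i).
Variable x0 : forall i, X i.
Variable Fj : forall j : 'I_n, (forall k : {k : 'I_n | k \in Ij j}, X (val k)) -> X j.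
Variable Lam : 'I_n -> 'I_n -> R.
Hypothesis Lam_ge0 : forall i j, 0 <= Lam i j.
Hypothesis Fj_lipschitz : forall j (a b : forall k : {k : 'I_n | k \in Ij j}, X (val k)),
  d j (Fj j a) (Fj j b)
  <= \sum_(k : {k : 'I_n | k \in Ij j}) Lam (val k) j * d (val k) (a k) (b k).
Set Implicit Arguments.

Local Notation F := (Fmap Fj).
Local Notation Lam_in j := (\sum_(k : {k : 'I_n | k \in Ij j}) Lam (val k) j).

Lemma Lam_in_add1_gt0 j : 0 < 1 + Lam_in j.
Proof. have : 0 <= Lam_in j by apply: sumr_ge0. lra. Qed.

Lemma Fmap_dist_lt j (a b : forall i, X i) (e : R) : 0 < e ->
  (forall k : {k : 'I_n | k \in Ij j},
     d (val k) (a (val k)) (b (val k)) < e / (1 + Lam_in j)) ->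
  d j (F a j) (F b j) < e.
Proof.
move=> e_gt0 ab_lt; have Lam_pos := Lam_in_add1_gt0 j.
rewrite /Fmap; apply: le_lt_trans (Fj_lipschitz _ _ _) _.
apply: le_lt_trans (_ : Lam_in j * (e / (1 + Lam_in j)) < e).
  by rewrite mulr_suml; apply: ler_sum => k _; apply: ler_wpM2l => //; apply: ltW.
by rewrite mulrA ltr_pdivrMr //; nra.
Qed.

Lemma Fmap_continuous u j (e : R) : 0 < e -> exists2 del : R, 0 < del &
  forall w, (forall i, d i (u i) (w i) < del) -> d j (F u j) (F w j) < e.
Proof.
move=> e_gt0; exists (e / (1 + Lam_in j)) => [|w uw_lt]; last exact: Fmap_dist_lt.
by rewrite divr_gt0 ?Lam_in_add1_gt0.
Qed.

Definition synchronizing (i : 'I_n) := forall e : R, 0 < e ->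
  eventually (fun k => forall y y', d i (iter k F y i) (iter k F y' i) < e).

Lemma synchronizing_inputs i :
  (forall k : {k : 'I_n | k \in Ij i}, synchronizing (val k)) -> synchronizing i.
Proof.
move=> inputs_sync e e_gt0.
have del_gt0 : 0 < e / (1 + Lam_in i) by rewrite divr_gt0 ?Lam_in_add1_gt0.
have [K HK] := eventually_forall_fin (fun k => inputs_sync k _ del_gt0).
exists K.+1 => -[|k] // Kk y y'.
by rewrite !iterS; apply: Fmap_dist_lt => // kk; apply: HK.
Qed.

Variable S : {set 'I_n}.
Hypothesis S_st0 : st0 Ij S.
Variable Lt : EI Ij S -> EI Ij S -> R.
Hypothesis Lt_lipschitz :
  lipschitz_consts (fun p : EI Ij S => d (base p)) (expansion Fj x0) (@dep n Ij S) Lt.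
Hypothesis Lt_rho_lt1 : spectral_radius (mx_of Lt) < 1.

Local Notation lift := (lift_state Fj (S := S)).

Definition Lt_pow m (p q : EI Ij S) := (mx_of Lt ^+ m) (enum_rank p) (enum_rank q).

Lemma Lt_powS m p q : Lt_pow m.+1 p q = \sum_r Lt_pow m p r * Lt r q.
Proof.
rewrite /Lt_pow exprSr -[_ * mx_of Lt]/(_ *m _) mxE.
rewrite (reindex enum_rank) /=; last by apply: onW_bij; apply: enum_rank_bij.
by apply: eq_bigr => r _; rewrite /mx_of mxE !enum_rankK.
Qed.

Lemma Lt_pow0 p q : Lt_pow 0 p q = (p == q)%:R.
Proof. by rewrite /Lt_pow expr0 mxE (inj_eq enum_rank_inj). Qed.

(* Once [k >= n], one step of [F] is one step of the expansion on lifted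
   states, so the Lipschitz constants [Lt] propagate distances. *)
Lemma lift_state_dist_le (B : R) y y' m q : (forall i (u w : X i), d i u w <= B) ->
  d (base q) (lift y (n + m) q) (lift y' (n + m) q) <= B * \sum_p Lt_pow m p q.
Proof.
case: Lt_lipschitz => Lt_ge0 _ expansion_lip d_le_B.
elim: m q => [|m IH] q.
  rewrite (bigD1 q) //= Lt_pow0 eqxx big1 ?addr0 ?mulr1 //.
  by move=> p /negbTE pq; rewrite Lt_pow0 pq.
have := expansion_lip (lift y (n + m)) (lift y' (n + m)) q.
rewrite !expansion_lift_state ?leq_addr // -!addnS => /le_trans; apply.
rewrite (eq_bigr _ (fun p _ => Lt_powS m p q)) exchange_big mulr_sumr.
apply: ler_sum => r _; rewrite -mulr_suml mulrA mulrC.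
by apply: ler_wpM2r; [exact: Lt_ge0 | exact: IH].
Qed.

Lemma synchronizing_S j : j \in S -> synchronizing j.
Proof.
move=> jS e e_gt0; have [B B_ge0 d_le_B] := dist_bounded_fin d_metric d_compact x0.
pose N : R := #|{: EI Ij S}|%:R.
have N_ge0 : 0 <= N by apply: ler0n.
pose del := e / ((B + 1) * (N + 1)).
have BN_gt0 : 0 < (B + 1) * (N + 1) by apply: mulr_gt0; lra.
have del_gt0 : 0 < del by apply: divr_gt0.
have delE : (B + 1) * (N + 1) * del = e by rewrite /del mulrC mulfVK ?gt_eqF.
have [M HM] := eventually_forall_fin (fun pq : EI Ij S * EI Ij S =>
  spectral_radius_lt1_mx_cvg0 Lt_rho_lt1 (enum_rank pq.1) (enum_rank pq.2) del_gt0).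
exists (n + M)%N => k nMk y y'.
have [m -> Mm] : exists2 m, k = (n + m)%N & (M <= m)%N by exists (k - n)%N; lia.
pose jS' : EI Ij S := exist _ (inl j) jS.
apply: le_lt_trans (lift_state_dist_le y y' m jS' d_le_B) _.
have sum_le : \sum_p Lt_pow m p jS' <= del * N.
  apply: le_trans (_ : \sum_(p : EI Ij S) del <= _); last first.
    by rewrite sumr_const -mulr_natr.
  by apply: ler_sum => p _; apply/ltW/(le_lt_trans (ler_norm _) (HM m Mm (p, jS'))).
have : B * \sum_p Lt_pow m p jS' <= B * (del * N) by apply: ler_wpM2l.
by nra.
Qed.

(* Following inputs outside [S] backwards cannot produce a path of more than
   [n] vertices without closing a cycle outside [S], which [st0] forbids. *)
Lemma synchronizing_path m : forall i q, path (gedge Ij) i q -> uniq (i :: q) ->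
  all (fun v => v \notin S) q -> (n <= m + size q)%N -> synchronizing i.
Proof.
elim: m => [|m IH] i q iq_path iq_uniq q_S nmq.
all: have [iS|iS] := boolP (i \in S); first exact: synchronizing_S.
  by have := uniq_size_ord iq_uniq => /=; lia.
apply: synchronizing_inputs => k.
have [kS|kS] := boolP (val k \in S); first exact: synchronizing_S.
have kiq_path : path (gedge Ij) (val k) (i :: q) by rewrite /= iq_path andbT; apply: valP.
have iq_S : all (fun v => v \notin S) (i :: q) by rewrite /= iS.
apply: (IH _ (i :: q)) => //; last by rewrite /=; lia.
rewrite cons_uniq iq_uniq andbT; apply/negP => kiq.
apply: (st0_no_cycle_through S_st0 kS kiq_path iq_uniq kiq).
by apply/allP => v /mem_take; move/allP: iq_S; apply.
Qed.

Lemma Fmap_synchronizing (e : R) : 0 < e ->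
  eventually (fun k => forall i y y', d i (iter k F y i) (iter k F y' i) < e).
Proof.
move=> e_gt0; apply: eventually_forall_fin => i.
by apply: (synchronizing_path (m := n) (q := [::])) => //; rewrite addn0.
Qed.

End Synchronization.

Theorem theorem9 (R : realType) (n : nat) (X : 'I_n -> Type)
  (d : forall i, X i -> X i -> R)
  (Hmetric : forall i, is_metric (d i))
  (Hcompact : forall i, dcompact (d i))
  (x0 : forall i, X i)
  (Ij : 'I_n -> {set 'I_n}) (HIj : forall j, Ij j != finset.set0)
  (Fj : forall j : 'I_n, (forall k : {k : 'I_n | k \in Ij j}, X (val k)) -> X j)
  (HFcont : forall j, dcontinuous (fun k : {k : 'I_n | k \in Ij j} => d (val k))
                                  (d j) (Fj j))
  (Lam : 'I_n -> 'I_n -> R)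
  (HLam0 : forall i j, 0 <= Lam i j)
  (HLamz : forall i j, i \notin Ij j -> Lam i j = 0)
  (HLip : forall j (a b : forall k : {k : 'I_n | k \in Ij j}, X (val k)),
      d j (Fj j a) (Fj j b)
      <= \sum_(k : {k : 'I_n | k \in Ij j}) Lam (val k) j * d (val k) (a k) (b k))
  (S : {set 'I_n}) (HS : st0 Ij S)
  (Lt : EI Ij S -> EI Ij S -> R)
  (HLt : lipschitz_consts (fun p : EI Ij S => d (base p))
           (expansion Fj x0) (@dep n Ij S) Lt)
  (Hrho : spectral_radius (mx_of Lt) < 1) :
  exists xbar : forall i, X i,
    Fmap Fj xbar = xbar /\
    forall y : forall i, X i, forall e : R, 0 < e ->
      exists N : nat, forall k : nat, (N <= k)%N ->
        dmax d (iter k (Fmap Fj) y) xbar < e.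
Proof.
apply: (synchronizing_attracting_fixed_point Hmetric Hcompact _ _ x0).
  exact: Fmap_continuous HLam0 HLip.
move=> e e_gt0; exact: (Fmap_synchronizing Hmetric Hcompact HLam0 HLip HS HLt Hrho e_gt0).
Qed.
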